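(* The following hold. (1) For $n\ge 5$, $P_n^3$ is odd prime if and only if $n\in\{5,6,7,9,10,13\}$. (2) For $n\ge 6$, $P_n^4$ is odd prime if and only if $n\in\{6,7\}$. (3) For $n\ge 7$, $P_n^5$ is odd prime if and only if $n=7$. (4) For every $k\ge 6$ and every $n\ge k+2$, $P_n^k$ is not odd prime. (5) For every $k\ge 3$ and every $n\ge k+2$, $C_n^k$ is not odd prime.
   Context: All graphs are finite and simple. A graph $G$ of order $N$ is odd prime if there is a bijection $\ell:V(G)\to\{1,3,\ldots,2N-1\}$ with $\gcd(\ell(u),\ell(v))=1$ for every edge $uv$. For a graph $G$ and $k\ge 1$, the power $G^k$ has vertex set $V(G)$, with $u\ne v$ adjacent iff their distance in $G$ is at most $k$. $P_n$ is the path and $C_n$ the cycle on $n$ vertices. For paths only $n\ge k+2$ is considered, since otherwise $P_n^k$ is complete. *)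

From mathcomp Require Import all_boot.
Set Implicit Arguments. Unset Strict Implicit. Unset Printing Implicit Defensive.

(* A simple graph is a symmetric irreflexive relation e on a finite type. *)

Fixpoint within (T : finType) (e : rel T) (k : nat) (u v : T) : bool :=
  match k with
  | 0 => u == v
  | k'.+1 => within e k' u v || [exists w, within e k' u w && e w v]
  end.

Definition gpower (T : finType) (e : rel T) (k : nat) : rel T :=
  fun u v => (u != v) && within e k u v.

Definition path_graph (n : nat) : rel 'I_n :=
  fun i j => (i.+1 == j :> nat) || (j.+1 == i :> nat).

Definition cycle_graph (n : nat) : rel 'I_n :=
  fun i j => (j == i.+1 %% n :> nat) || (i == j.+1 %% n :> nat).

(* Odd prime labeling: a bijection f : V -> 'I_N (N = |V|); the label of v
   is l(v) = 2 f(v) + 1, so l is a bijection V -> {1,3,...,2N-1}. *)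
Definition odd_prime (T : finType) (e : rel T) : Prop :=
  exists f : T -> 'I_#|T|, bijective f /\
    forall u v, e u v -> coprime (2 * f u + 1) (2 * f v + 1).
Arguments path_graph n : clear implicits.
Arguments cycle_graph n : clear implicits.

From mathcomp Require Import all_boot zify.

(* The vertices whose labels are multiples of 3 form an independent set, and
   (N + 1) / 3 of the labels 1, 3, ..., 2N - 1 are multiples of 3.  Two
   vertices of an independent set of P_n^k are more than k apart, so it has at
   most (n - 1) / (k + 1) + 1 elements; on C_n^k the same spacing argument,
   applied inside the arc of length n - k - 1 that follows the smallest
   element, gives at most n / (k + 1).  Comparing the two bounds rules out all
   but finitely many (n, k), and explicit labellings settle the survivors. *)

Set Implicit Arguments.
Unset Strict Implicit.
Unset Printing Implicit Defensive.

Lemma within_le (T : finType) (e : rel T) j k u v :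
  j <= k -> within e j u v -> within e k u v.
Proof.
elim: k => [|k IHk]; first by rewrite leqn0 => /eqP ->.
by rewrite leq_eqVlt => /orP [/eqP -> //|/IHk Hjk] /Hjk /= ->.
Qed.

Lemma within_walk (T : finType) (e : rel T) (x : nat -> T) j :
  (forall i, i < j -> e (x i) (x i.+1)) -> within e j (x 0) (x j).
Proof.
elim: j => [|j IHj] Hx /=; first exact: eqxx.
apply/orP; right; apply/existsP; exists (x j).
by rewrite IHj ?Hx // => i Hi; apply: Hx; apply: ltnW.
Qed.

Lemma within_path_graph_add n j (u v : 'I_n) :
  u + j = v -> within (path_graph n) j u v.
Proof.
move=> Huv; pose x i : 'I_n := insubd u (u + i).
have Hx i : i <= j -> val (x i) = u + i.
  by move=> Hi; rewrite val_insubd ifT //; have := ltn_ord v; lia.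
have -> : v = x j by apply: val_inj; rewrite Hx.
have -> : u = x 0 by apply: val_inj; rewrite Hx ?addn0.
by apply: within_walk => i Hi; rewrite /path_graph !Hx ?addnS ?eqxx // ltnW.
Qed.

Lemma within_cycle_graph_add n j (u v : 'I_n) :
  (u + j) %% n = v -> within (cycle_graph n) j u v.
Proof.
have n_gt0 : 0 < n by case: n u {v} => [[]|].
move=> Huv; pose x i : 'I_n := insubd u ((u + i) %% n).
have Hx i : val (x i) = (u + i) %% n by rewrite val_insubd ltn_pmod.
have -> : v = x j by apply: val_inj; rewrite Hx.
have -> : u = x 0 by apply: val_inj; rewrite Hx addn0 modn_small.
apply: within_walk => i _; rewrite /cycle_graph !Hx.
by apply/orP; left; apply/eqP; rewrite addnS -[in RHS]addn1 modnDml addn1.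
Qed.

Lemma within_path_graph_dist n k (u v : 'I_n) :
  within (path_graph n) k u v -> (u - v <= k) && (v - u <= k).
Proof.
elim: k v => [|k IHk] v /=; first by move=> /eqP ->; rewrite subnn.
case/orP; first by move/IHk; lia.
case/existsP => w /andP [/IHk Hw]; rewrite /path_graph; case/orP => /eqP; lia.
Qed.

Definition independent (T : finType) (e : rel T) (S : {set T}) : Prop :=
  {in S &, forall u v, ~~ e u v}.

Lemma odd_prime_independent (T : finType) (e : rel T) :
  odd_prime e -> exists2 S : {set T}, independent e S & (#|T| + 1) %/ 3 <= #|S|.
Proof.
case=> f [[g fK gK] f_coprime].
exists [set v | 3 %| 2 * f v + 1].
  move=> u v; rewrite !inE => Hu Hv; apply/negP => /f_coprime Huv.
  by have := coprime_dvdr Hv (coprime_dvdl Hu Huv).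
have Ht (t : 'I_((#|T| + 1) %/ 3)) : 3 * t + 1 < #|T| by have := ltn_ord t; lia.
pose h t := g (Ordinal (Ht t)).
have h_inj : injective h.
  move=> t1 t2 /(congr1 (val \o f)); rewrite /= /h !gK /= => t12.
  by apply: ord_inj; lia.
rewrite -[X in X <= _]card_ord -(card_imset _ h_inj).
apply/subset_leq_card/subsetP => _ /imsetP [t _ ->].
by rewrite inE /h gK; apply/dvdnP; exists (2 * t + 1); rewrite /=; lia.
Qed.

Lemma card_gapped n b L d (S : {set 'I_n}) : 0 < d ->
  {in S, forall s : 'I_n, b <= s <= b + L} ->
  {in S &, forall s t : 'I_n, s < t -> s + d <= t} -> #|S| <= L %/ d + 1.
Proof.
move=> d_gt0 S_range S_gap.
pose g (s : 'I_n) : 'I_(L %/ d).+1 := inord ((s - b) %/ d).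
suff g_inj : {in S &, injective g}.
  by rewrite -(card_in_imset g_inj) addn1 -[X in _ <= X]card_ord max_card.
have gap s t : s \in S -> t \in S -> s < t -> (s - b) %/ d < (t - b) %/ d.
  move=> Hs Ht st; move: (S_range s Hs) (S_gap s t Hs Ht st) => s_range s_gap.
  rewrite -[X in X <= _]addn1 -divnDMl // mul1n.
  by apply: leq_div2r; lia.
move=> s t Hs Ht /(congr1 val) /=.
have lt_bound r : r \in S -> (r - b) %/ d < (L %/ d).+1.
  by move=> Hr; rewrite ltnS leq_div2r //; have := S_range r Hr; lia.
rewrite !inordK ?lt_bound //.
case: (ltngtP s t) => [st|ts|/val_inj //].
  by have := gap s t Hs Ht st; lia.
by have := gap t s Ht Hs ts; lia.
Qed.

Lemma path_power_independent_card n k (S : {set 'I_n}) :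
  independent (gpower (path_graph n) k) S -> #|S| <= (n - 1) %/ k.+1 + 1.
Proof.
move=> S_ind; apply: (card_gapped (b := 0)) => // [s _ | s t Hs Ht st].
  by have := ltn_ord s; lia.
rewrite leqNgt; apply/negP => Hst; have /negP := S_ind s t Hs Ht; apply.
rewrite /gpower neq_ltn st /=.
by apply: (within_le (j := t - s)); [lia | apply: within_path_graph_add; lia].
Qed.

Lemma cycle_power_independent_card n k (S : {set 'I_n}) : k < n ->
  independent (gpower (cycle_graph n) k) S -> #|S| <= n %/ k.+1.
Proof.
move=> k_lt_n S_ind.
have far (s t : 'I_n) j : s \in S -> t \in S -> s != t -> j <= k ->
    (s + j) %% n = t -> False.
  move=> Hs Ht st jk Hj; have /negP := S_ind s t Hs Ht; apply.
  by rewrite /gpower st (within_le jk) // within_cycle_graph_add.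
have [->|[s0 Hs0]] := set_0Vmem S; first by rewrite cards0.
have [m Hm m_min] := arg_minnP (fun i : 'I_n => nat_of_ord i) Hs0.
have -> : n %/ k.+1 = (n - k.+1) %/ k.+1 + 1.
  by rewrite -{1}(subnK k_lt_n) divnDr ?dvdnn // divnn.
apply: (card_gapped (b := m)) => // [s Hs | s t Hs Ht st].
- rewrite m_min //= leqNgt; apply/negP => s_far.
  apply: (far s m (n - (s - m)) Hs Hm).
  + by rewrite neq_ltn (leq_ltn_trans (leq_addr _ _) s_far) orbT.
  + lia.
  + have -> : s + (n - (s - m)) = n + m by have := ltn_ord s; lia.
    by rewrite modnDl modn_small.
- rewrite leqNgt; apply/negP => t_near.
  apply: (far s t (t - s) Hs Ht).
  + by rewrite neq_ltn st.
  + lia.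
  + by rewrite subnKC ?modn_small // ltnW.
Qed.

Definition coprime_within (k : nat) (l : seq nat) : bool :=
  all (fun i => all (fun j => (i < j <= i + k) ==>
         coprime (2 * nth 0 l i + 1) (2 * nth 0 l j + 1))
     (iota 0 (size l))) (iota 0 (size l)).

Lemma odd_prime_path_power k (l : seq nat) :
  perm_eq l (iota 0 (size l)) -> coprime_within k l ->
  odd_prime (gpower (path_graph (size l)) k).
Proof.
set n := size l => l_perm l_cop.
have l_lt (i : 'I_n) : nth 0 l i < #|'I_n|.
  by have := mem_nth 0 (ltn_ord i); rewrite (perm_mem l_perm) mem_iota card_ord.
exists (fun i => Ordinal (l_lt i)); split.
  apply: inj_card_bij; last by rewrite !card_ord.
  move=> i j /(congr1 val) /= /eqP.
  by rewrite nth_uniq ?(perm_uniq l_perm) ?iota_uniq // => /eqP /ord_inj.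
have cop (i j : 'I_n) : i < j <= i + k ->
    coprime (2 * nth 0 l i + 1) (2 * nth 0 l j + 1).
  move: l_cop => /allP /(_ i); rewrite mem_iota ltn_ord => /(_ isT) /allP /(_ j).
  by rewrite mem_iota ltn_ord => /(_ isT) /implyP.
move=> u v /andP [uv /within_path_graph_dist /andP [vu_le uv_le]] /=.
case: (ltngtP u v) => [lt | gt | /val_inj eq]; last by rewrite eq eqxx in uv.
  by apply: cop; rewrite lt; lia.
by rewrite coprime_sym; apply: cop; rewrite gt; lia.
Qed.

Lemma odd_prime_path_power_witness k (ls : seq (seq nat)) n :
  all (fun l => perm_eq l (iota 0 (size l)) && coprime_within k l) ls ->
  n \in map size ls -> odd_prime (gpower (path_graph n) k).
Proof.
move=> /allP ls_ok /mapP [l /ls_ok /andP [l_perm l_cop] ->].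
exact: odd_prime_path_power.
Qed.

Lemma odd_prime_path_power_bound n k :
  odd_prime (gpower (path_graph n) k) -> (n + 1) %/ 3 <= (n - 1) %/ k.+1 + 1.
Proof.
case/odd_prime_independent => S /path_power_independent_card S_le.
by rewrite card_ord => /leq_trans; apply.
Qed.

Lemma odd_prime_cycle_power_bound n k : k < n ->
  odd_prime (gpower (cycle_graph n) k) -> (n + 1) %/ 3 <= n %/ k.+1.
Proof.
move=> k_lt_n; case/odd_prime_independent => S.
move=> /(cycle_power_independent_card k_lt_n) S_le.
by rewrite card_ord => /leq_trans; apply.
Qed.

Definition path_power3_labellings : seq (seq nat) :=
  [:: [:: 1; 0; 2; 3; 4]; [:: 0; 1; 2; 3; 5; 4]; [:: 0; 1; 2; 3; 5; 4; 6];
      [:: 1; 0; 2; 3; 4; 5; 6; 8; 7]; [:: 0; 1; 2; 3; 5; 4; 6; 8; 9; 7];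
      [:: 1; 0; 2; 3; 4; 5; 6; 12; 10; 8; 9; 11; 7]].

Definition path_power4_labellings : seq (seq nat) :=
  [:: [:: 1; 0; 2; 3; 5; 4]; [:: 0; 1; 2; 3; 5; 6; 4]].

Definition path_power5_labelling : seq nat := [:: 1; 0; 2; 3; 5; 6; 4].

Theorem theorem5p3 :
  (forall n : nat, 5 <= n ->
     (odd_prime (gpower (path_graph n) 3) <-> n \in [:: 5; 6; 7; 9; 10; 13])) /\
  (forall n : nat, 6 <= n ->
     (odd_prime (gpower (path_graph n) 4) <-> n \in [:: 6; 7])) /\
  (forall n : nat, 7 <= n ->
     (odd_prime (gpower (path_graph n) 5) <-> n = 7)) /\
  (forall k n : nat, 6 <= k -> k + 2 <= n ->
     ~ odd_prime (gpower (path_graph n) k)) /\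
  (forall k n : nat, 3 <= k -> k + 2 <= n ->
     ~ odd_prime (gpower (cycle_graph n) k)).
Proof.
split; [|split; [|split; [|split]]].
- move=> n n_ge5; split=> [/odd_prime_path_power_bound | n_in]; first by rewrite !inE; lia.
  by apply: (odd_prime_path_power_witness (ls := path_power3_labellings) _ n_in); vm_compute.
- move=> n n_ge6; split=> [/odd_prime_path_power_bound | n_in]; first by rewrite !inE; lia.
  by apply: (odd_prime_path_power_witness (ls := path_power4_labellings) _ n_in); vm_compute.
- move=> n n_ge7; split=> [/odd_prime_path_power_bound | ->]; first lia.
  by rewrite -[7]/(size path_power5_labelling); apply: odd_prime_path_power; vm_compute.
- move=> k n k_ge6 n_ge /odd_prime_path_power_bound.
  have : (n - 1) %/ k.+1 <= (n - 1) %/ 7 by apply: leq_div2l; lia.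
  lia.
- move=> k n k_ge3 n_ge; have k_lt_n : k < n by lia.
  move=> /(odd_prime_cycle_power_bound k_lt_n).
  have : n %/ k.+1 <= n %/ 4 by apply: leq_div2l; lia.
  lia.
Qed.
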